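(* Let $(\mathcal{T},\mathcal{F},\mathcal{S})$ be a tree of fusion systems satisfying Hypothesis $(H)$ with distinguished vertex $v_*$, and put $S:=\mathcal{S}(v_* )$ (with all $\mathcal{S}(v)$, $\mathcal{S}(e)$ identified with subgroups of $S$ as described in the context). Let $$\mathcal{F}_\mathcal{T}:=\langle \operatorname{Hom}_{\mathcal{F}(v)}(P,\mathcal{S}(v)) \mid P\le \mathcal{S}(v),\ v\in V(\mathcal{T})\rangle_S .$$ Then $\mathcal{F}_\mathcal{T}$ (together with the inclusions $\mathcal{S}(v)\hookrightarrow S$, $\mathcal{S}(e)\hookrightarrow S$) is a colimit of the functor $\mathcal{F}$ in the category of fusion systems. Moreover, every $\alpha\in\operatorname{Hom}_{\mathcal{F}_\mathcal{T}}(P,S)$ can be written as a composite $$P=P_0\xrightarrow{\alpha_0}P_1\xrightarrow{\alpha_1}\cdots\xrightarrow{\alpha_{n-1}}P_n=P\alpha,$$ where there are vertices $v_0,\dots,v_{n-1}$ of $\mathcal{T}$ with $v_i$ and $v_{i+1}$ adjacent in $\mathcal{T}$ for $0\le i\le n-2$, $P_i,P_{i+1}\le \mathcal{S}(v_i)$ and $\alpha_i\in\operatorname{Hom}_{\mathcal{F}(v_i)}(P_i,P_{i+1})$ for each $i$.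
   Context: Conventions: homomorphisms act on the right ($x\varphi$), and $\alpha\circ\beta$ means ''first $\alpha$, then $\beta$''. $\iota_P^Q$ denotes inclusion $P\hookrightarrow Q$. A fusion system $\mathcal{F}$ on a finite $p$-group $S$ is a category whose objects are the subgroups of $S$, with $\operatorname{Hom}_S(P,Q)\subseteq\operatorname{Hom}_\mathcal{F}(P,Q)\subseteq\operatorname{Inj}(P,Q)$ (conjugation maps by elements of $S$, resp. all injective homomorphisms), such that each morphism factors as an $\mathcal{F}$-isomorphism onto its image followed by an inclusion. For a set $\mathcal{C}$ of injective maps between subgroups of $S$, $\langle\mathcal{C}\rangle_S$ is the smallest fusion system on $S$ containing $\mathcal{C}$. A morphism from a fusion system $\mathcal{F}$ on $S$ to a fusion system $\mathcal{E}$ on $T$ is a homomorphism $\varphi:S\to T$ such that for all $P,R\le S$ and $\alpha\in\operatorname{Hom}_\mathcal{F}(P,R)$ there is $\beta\in\operatorname{Hom}_\mathcal{E}(P\varphi,R\varphi)$ with $\alpha\circ\varphi|_R=\varphi|_P\circ\beta$; it is injective if the induced maps $\operatorname{Hom}_\mathcal{F}(P,S)\to\operatorname{Hom}_\mathcal{E}(P\varphi,T)$ are injective. This gives the category of fusion systems. A finite tree $\mathcal{T}$ is regarded as a category whose objects are its vertices and edges, with a unique morphism $f_{ev}:e\to v$ whenever vertex $v$ is incident on edge $e$. A tree of fusion systems $(\mathcal{T},\mathcal{F},\mathcal{S})$ consists of a finite tree $\mathcal{T}$, a functor $\mathcal{S}$ from $\mathcal{T}$ to groups assigning finite $p$-groups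 $\mathcal{S}(v),\mathcal{S}(e)$ and sending each $f_{ev}$ to a monomorphism $\mathcal{S}(e)\to\mathcal{S}(v)$, and a functor $\mathcal{F}$ assigning a fusion system $\mathcal{F}(v)$ on $\mathcal{S}(v)$ and $\mathcal{F}(e)$ on $\mathcal{S}(e)$, such that $\mathcal{S}(f_{ev})$ is an injective morphism of fusion systems $\mathcal{F}(e)\to\mathcal{F}(v)$. Hypothesis $(H)$: there is a vertex $v_*$ such that for every vertex $v\ne v_*$, if $e$ is the edge incident on $v$ lying on the unique minimal path from $v$ to $v_*$, then $\mathcal{S}(f_{ev}):\mathcal{S}(e)\to\mathcal{S}(v)$ is an isomorphism. Under $(H)$, using these isomorphisms and the maps $\mathcal{S}(f_{ev})$, every $\mathcal{S}(v)$ and $\mathcal{S}(e)$ is identified with a subgroup of $S=\mathcal{S}(v_* )$ (which is the colimit of $\mathcal{S}$) so that all $\mathcal{S}(f_{ev})$ become inclusions, and each $\mathcal{F}(e)$ becomes a subsystem of $\mathcal{F}(v)$ for $v$ incident on $e$. *)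

From HB Require Import structures.
From mathcomp Require Import all_boot all_fingroup all_solvable.
Set Implicit Arguments. Unset Strict Implicit. Unset Printing Implicit Defensive.

Local Open Scope group_scope.

(* Maps act on the right in the paper; here a morphism P -> Q is a function
   f : gT -> gT, considered only through its restriction to P.
   "first f then g" is the function (g \o f). *)

(* A candidate fusion system: F P Q f  means  f \in Hom_F(P,Q). *)
Definition fsys (gT : finGroupType) := {set gT} -> {set gT} -> (gT -> gT) -> Prop.

Definition inj_hom (gT : finGroupType) (P Q : {set gT}) (f : gT -> gT) :=
  [/\ {in P &, {morph f : x y / x * y}}, {in P &, injective f} & f @: P \subset Q].

Definition is_fusion_system (gT : finGroupType) (S : {set gT}) (F : fsys gT) :=
  [/\
      (forall P Q f, F P Q f ->
         [/\ group_set P, group_set Q, P \subset S, Q \subset S & inj_hom P Q f]),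
      (* morphisms are maps P -> Q: only the restriction to P matters *)
      (forall P Q f g, F P Q f -> {in P, f =1 g} -> F P Q g),
      (forall (P Q : {group gT}) (s : gT), P \subset S -> Q \subset S -> s \in S ->
         P :^ s \subset Q -> F P Q (fun x => x ^ s)),
      (forall P Q R f g, F P Q f -> F Q R g -> F P R (g \o f)) &
      (forall P Q f, F P Q f ->
         F P (f @: P) f /\
         exists g, F (f @: P) P g /\ {in P, forall x, g (f x) = x})].

Definition gen_fusion (gT : finGroupType) (S : {set gT}) (C : fsys gT) : fsys gT :=
  fun P Q f => forall F : fsys gT, is_fusion_system S F ->
    (forall P' Q' f', C P' Q' f' -> F P' Q' f') -> F P Q f.

Definition is_fs_morphism (gT rT : finGroupType) (S : {set gT}) (F : fsys gT)
    (T : {set rT}) (E : fsys rT) (phi : gT -> rT) :=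
  [/\ {in S &, {morph phi : x y / x * y}}, phi @: S \subset T &
      forall (P R : {set gT}) alpha, P \subset S -> R \subset S -> F P R alpha ->
        exists beta, E (phi @: P) (phi @: R) beta /\
                     {in P, forall x, beta (phi x) = phi (alpha x)}].

Definition is_inj_fs_morphism (gT rT : finGroupType) (S : {set gT}) (F : fsys gT)
    (T : {set rT}) (E : fsys rT) (phi : gT -> rT) :=
  is_fs_morphism S F T E phi /\
  forall (P : {set gT}) alpha1 alpha2 beta1 beta2, P \subset S ->
    F P S alpha1 -> F P S alpha2 ->
    E (phi @: P) T beta1 -> E (phi @: P) T beta2 ->
    {in P, forall x, beta1 (phi x) = phi (alpha1 x)} ->
    {in P, forall x, beta2 (phi x) = phi (alpha2 x)} ->
    {in phi @: P, beta1 =1 beta2} -> {in P, alpha1 =1 alpha2}.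

Section Trees.
Variables (V Ed : finType) (ends : Ed -> V * V).

Definition incident (e : Ed) (v : V) := v = (ends e).1 \/ v = (ends e).2.
Definition joins (e : Ed) (a b : V) := ends e = (a, b) \/ ends e = (b, a).
Definition adjacent (a b : V) := a <> b /\ exists e, joins e a b.

(* a walk u = vs 0, es 0, vs 1, ..., es (k-1), vs k = w *)
Definition walk (u w : V) (k : nat) (vs : nat -> V) (es : nat -> Ed) :=
  [/\ vs 0 = u, vs k = w & forall i, i < k -> joins (es i) (vs i) (vs i.+1)].

Definition tree_connected := forall u w, exists k vs es, walk u w k vs es.

Definition tree_acyclic := ~ exists u k vs es,
  [/\ 0 < k, walk u u k vs es &
      forall i j, i < k -> j < k -> es i = es j -> i = j].

Definition is_tree := [/\ inhabited V, tree_connected & tree_acyclic].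

Definition first_edge_towards (e : Ed) (v w : V) := exists k vs es,
  [/\ 0 < k, walk v w k vs es,
      (forall i j, i <= k -> j <= k -> vs i = vs j -> i = j) & es 0 = e].

End Trees.

(* All S(v), S(e) are subgroups of the ambient group gT and the maps S(f_ev)
   are inclusions S(e) \subset S(v). *)
Definition tree_of_fusion_systems (p : nat) (V Ed : finType) (ends : Ed -> V * V)
    (gT : finGroupType) (Sv : V -> {group gT}) (Se : Ed -> {group gT})
    (Fv : V -> fsys gT) (Fe : Ed -> fsys gT) :=
  [/\ prime p, is_tree ends,
      (forall v, p.-group (Sv v) /\ is_fusion_system (Sv v) (Fv v)),
      (forall e, p.-group (Se e) /\ is_fusion_system (Se e) (Fe e)) &
      (forall e v, incident ends e v ->
         Se e \subset Sv v /\
         is_inj_fs_morphism (Se e) (Fe e) (Sv v) (Fv v) (fun x => x))].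

(* Hypothesis (H), in identified form: S(f_ev) is an isomorphism, i.e. S(e) = S(v) *)
Definition hypH (V Ed : finType) (ends : Ed -> V * V) (gT : finGroupType)
    (Sv : V -> {group gT}) (Se : Ed -> {group gT}) (vstar : V) :=
  forall v e, v <> vstar -> first_edge_towards ends e v vstar ->
    (Se e : {set gT}) = Sv v.

Definition tree_generators (V : finType) (gT : finGroupType)
    (Sv : V -> {group gT}) (Fv : V -> fsys gT) : fsys gT :=
  fun P Q f => exists v, (Q = Sv v) /\ Fv v P Q f.

Definition fs_cocone (V Ed : finType) (ends : Ed -> V * V)
    (gT : finGroupType) (Sv : V -> {group gT}) (Se : Ed -> {group gT})
    (Fv : V -> fsys gT) (Fe : Ed -> fsys gT)
    (rT : finGroupType) (T : {set rT}) (E : fsys rT)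
    (psiv : V -> gT -> rT) (psie : Ed -> gT -> rT) :=
  [/\ forall v, is_fs_morphism (Sv v) (Fv v) T E (psiv v),
      forall e, is_fs_morphism (Se e) (Fe e) T E (psie e) &
      forall e v, incident ends e v -> {in Se e, psie e =1 psiv v}].

Definition fs_colimit (p : nat) (V Ed : finType) (ends : Ed -> V * V)
    (gT : finGroupType) (Sv : V -> {group gT}) (Se : Ed -> {group gT})
    (Fv : V -> fsys gT) (Fe : Ed -> fsys gT) (S : {group gT}) (FS : fsys gT) :=
  [/\ p.-group S, is_fusion_system S FS,
      fs_cocone ends Sv Se Fv Fe S FS (fun _ x => x) (fun _ x => x) &
      forall (rT : finGroupType) (T : {group rT}) (E : fsys rT)
             (psiv : V -> gT -> rT) (psie : Ed -> gT -> rT),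
        p.-group T -> is_fusion_system T E ->
        fs_cocone ends Sv Se Fv Fe T E psiv psie ->
        exists theta : gT -> rT,
          [/\ is_fs_morphism S FS T E theta,
              (forall v, {in Sv v, theta =1 psiv v}),
              (forall e, {in Se e, theta =1 psie e}) &
              forall theta' : gT -> rT, is_fs_morphism S FS T E theta' ->
                (forall v, {in Sv v, theta' =1 psiv v}) ->
                (forall e, {in Se e, theta' =1 psie e}) ->
                {in S, theta' =1 theta}]].

Fixpoint chain_comp (T : Type) (a : nat -> T -> T) (n : nat) (x : T) : T :=
  match n with 0 => x | k.+1 => a k (chain_comp a k x) end.

(* Chains concatenate and reverse, so closed chains (from v_star back to
      v_star) form a fusion system containing the generators of F_T.  Hence
      every morphism of F_T is a closed chain, which gives the explicit
      decomposition.  For the universal property, a cocone psi is constant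
      along the tree, and its root component is a morphism F_T -> E by 1. *)

From HB Require Import structures.
From mathcomp Require Import all_boot all_fingroup all_solvable zify.
Set Implicit Arguments. Unset Strict Implicit. Unset Printing Implicit Defensive.
Local Open Scope group_scope.

Definition sub_inj_hom (gT : finGroupType) (S P Q : {set gT}) (f : gT -> gT) :=
  [/\ group_set P, group_set Q, P \subset S, Q \subset S & inj_hom P Q f].

Section FusionAxioms.
Variables (gT : finGroupType) (S : {set gT}) (F : fsys gT).
Hypothesis FS : is_fusion_system S F.

Lemma fs_sub_inj P Q f : F P Q f -> sub_inj_hom S P Q f.
Proof. by case: FS => H _ _ _ _; apply: H. Qed.

Lemma fs_ext P Q f g : F P Q f -> {in P, f =1 g} -> F P Q g.
Proof. by case: FS => _ H _ _ _; apply: H. Qed.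

Lemma fs_conj (P Q : {group gT}) s : P \subset S -> Q \subset S -> s \in S ->
  P :^ s \subset Q -> F P Q (conjg^~ s).
Proof. by case: FS => _ _ H _ _; apply: H. Qed.

Lemma fs_comp P Q R f g : F P Q f -> F Q R g -> F P R (g \o f).
Proof. by case: FS => _ _ _ H _; apply: H. Qed.

Lemma fs_img P Q f : F P Q f -> F P (f @: P) f.
Proof. by case: FS => _ _ _ _ H /H []. Qed.

Lemma fs_inv P Q f : F P Q f ->
  exists g, F (f @: P) P g /\ {in P, forall x, g (f x) = x}.
Proof. by case: FS => _ _ _ _ H /H []. Qed.

(* Inclusions of subgroups of S are morphisms (conjugation by 1). *)
Lemma fs_incl (P Q : {set gT}) : group_set P -> group_set Q -> Q \subset S ->
  P \subset Q -> F P Q id.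
Proof.
move=> gP gQ sQS sPQ; have sPS := subset_trans sPQ sQS.
have := @fs_conj (Group gP) (Group gQ) 1 sPS sQS (subsetP sPS 1 (group1 (Group gP))).
rewrite /= conjsg1 => /(_ sPQ) Fc.
by apply: fs_ext Fc _ => x _; rewrite conjg1.
Qed.

Lemma fs_restr (P Q P' : {set gT}) g : F P Q g -> group_set P' -> P' \subset P ->
  F P' (g @: P') g.
Proof.
move=> Fg gP' sP'P; have [gP _ sPS _ _] := fs_sub_inj Fg.
exact: fs_img (fs_comp (fs_incl gP' gP sPS sP'P) Fg).
Qed.

Lemma fs_retarget (P Q R : {set gT}) f : F P Q f -> f @: P \subset R ->
  group_set R -> R \subset S -> F P R f.
Proof.
move=> Ff sfR gR sRS; have Fi := fs_img Ff.
have [_ gfP _ _ _] := fs_sub_inj Fi.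
exact: fs_comp Fi (fs_incl gfP gR sRS sfR).
Qed.

End FusionAxioms.

Lemma hom_image_group (gT rT : finGroupType) (D : {group gT}) (P : {set gT})
    (f : gT -> rT) :
  {in D &, {morph f : x y / x * y}} -> group_set P -> P \subset D ->
  group_set (f @: P).
Proof.
move=> fM gP sPD; rewrite -(morphimEsub (Morphism fM) sPD).
exact: (morphim_groupset _ (Group gP)).
Qed.

Lemma left_inverse_exists (gT : finGroupType) (P : {set gT}) (f : gT -> gT) :
  {in P &, injective f} -> exists g, {in P, forall x, g (f x) = x}.
Proof.
move=> fI; exists (fun y => odflt y [pick x in P | f x == y]) => x xP.
case: pickP => [x' /andP[x'P /eqP e]|/(_ x)]; first exact: fI.
by rewrite xP eqxx.
Qed.

Section InjectiveHoms.
Variables (gT : finGroupType) (S : {set gT}).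

Lemma sub_inj_hom_ext P Q f g : sub_inj_hom S P Q f -> {in P, f =1 g} ->
  sub_inj_hom S P Q g.
Proof.
case=> gP gQ sPS sQS [fM fI sfQ] e; split=> //; split.
- by move=> x y xP yP /=; rewrite -!e ?fM // (@groupM _ (Group gP)).
- by move=> x y xP yP; rewrite -!e //; apply: fI.
- by rewrite -(eq_in_imset e).
Qed.

Lemma sub_inj_hom_comp P Q R f g : sub_inj_hom S P Q f -> sub_inj_hom S Q R g ->
  sub_inj_hom S P R (g \o f).
Proof.
case=> gP _ sPS _ [fM fI sfQ] [_ gR _ sRS [gM gI sgR]].
have fQ x : x \in P -> f x \in Q by move=> xP; apply: (subsetP sfQ); apply: imset_f.
split=> //; split.
- by move=> x y xP yP /=; rewrite fM // gM // fQ.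
- by move=> x y xP yP /= /gI; rewrite !fQ // => /(_ isT isT) /fI; apply.
- by rewrite imset_comp; apply: subset_trans sgR; apply: imsetS.
Qed.

Lemma sub_inj_hom_conj (P Q : {group gT}) s : P \subset S -> Q \subset S ->
  P :^ s \subset Q -> sub_inj_hom S P Q (conjg^~ s).
Proof.
move=> sPS sQS sPQ; split; rewrite ?groupP //; split=> //.
- by move=> x y _ _ /=; rewrite conjMg.
- by move=> x y _ _; apply: conjg_inj.
Qed.

Lemma sub_inj_hom_img P Q f : sub_inj_hom S P Q f -> sub_inj_hom S P (f @: P) f.
Proof.
case=> gP _ sPS sQS [fM fI sfQ]; split=> //.
- exact: (@hom_image_group _ _ (Group gP) P f fM gP (subxx P)).
- exact: subset_trans sfQ sQS.
Qed.

Lemma sub_inj_hom_inv P Q f g : sub_inj_hom S P Q f ->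
  {in P, forall x, g (f x) = x} -> sub_inj_hom S (f @: P) P g.
Proof.
move=> Hf gK; have [gP gfP sPS sfS [fM fI _]] := sub_inj_hom_img Hf.
split=> //; split.
- move=> _ _ /imsetP[x xP ->] /imsetP[y yP ->].
  by rewrite -fM // !gK // (@groupM _ (Group gP)).
- by move=> _ _ /imsetP[x xP ->] /imsetP[y yP ->]; rewrite !gK // => ->.
- by apply/subsetP=> _ /imsetP[_ /imsetP[x xP ->] ->]; rewrite gK.
Qed.

End InjectiveHoms.

(* A criterion for being a fusion system: it suffices to impose the axioms on a
   class X of maps among those that are injective homomorphisms between
   subgroups of S; the first axiom then holds by construction. *)
Section FusionFromClass.
Variables (gT : finGroupType) (S : {set gT}) (X : fsys gT).

Definition restrict_inj : fsys gT := fun P Q f => sub_inj_hom S P Q f /\ X P Q f.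

Hypotheses
  (Xext : forall P Q f g, sub_inj_hom S P Q f -> X P Q f -> {in P, f =1 g} -> X P Q g)
  (Xconj : forall (P Q : {group gT}) s, P \subset S -> Q \subset S -> s \in S ->
     P :^ s \subset Q -> X P Q (conjg^~ s))
  (Xcomp : forall P Q R f g, sub_inj_hom S P Q f -> sub_inj_hom S Q R g ->
     X P Q f -> X Q R g -> X P R (g \o f))
  (Ximg : forall P Q f, sub_inj_hom S P Q f -> X P Q f -> X P (f @: P) f)
  (Xinv : forall P Q f g, sub_inj_hom S P Q f -> X P Q f ->
     {in P, forall x, g (f x) = x} -> X (f @: P) P g).

Lemma restrict_inj_fs : is_fusion_system S restrict_inj.
Proof.
split.
- by move=> P Q f [].
- by move=> P Q f g [Hf Xf] e; split; [apply: sub_inj_hom_ext e | apply: Xext e].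
- move=> P Q s sPS sQS sS sPQ.
  by split; [exact: sub_inj_hom_conj | exact: Xconj].
- move=> P Q R f g [Hf Xf] [Hg Xg].
  by split; [apply: sub_inj_hom_comp Hg | apply: Xcomp Xf Xg].
- move=> P Q f [Hf Xf]; split.
    by split; [exact: sub_inj_hom_img Hf | exact: Ximg Hf Xf].
  have [_ _ _ _ [_ fI _]] := Hf; have [g gK] := left_inverse_exists fI.
  exists g; split=> //.
  by split; [exact: sub_inj_hom_inv Hf gK | exact: Xinv Hf Xf gK].
Qed.

End FusionFromClass.

Lemma gen_fusion_fs (gT : finGroupType) (S : {set gT}) (C F0 : fsys gT) :
  is_fusion_system S F0 -> (forall P Q f, C P Q f -> F0 P Q f) ->
  is_fusion_system S (gen_fusion S C).
Proof.
move=> F0fs CF0; split.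
- by move=> P Q f H; apply: (fs_sub_inj F0fs); apply: H.
- by move=> P Q f g H e F FF CF; exact: (fs_ext FF (H F FF CF) e).
- by move=> P Q s sPS sQS sS sPQ F FF CF; apply: (fs_conj FF).
- by move=> P Q R f g Hf Hg F FF CF; exact: (fs_comp FF (Hf F FF CF) (Hg F FF CF)).
- move=> P Q f H; split; first by move=> F FF CF; exact: (fs_img FF (H F FF CF)).
  have [_ _ _ _ [_ fI _]] := fs_sub_inj F0fs (H F0 F0fs CF0).
  have [g gK] := left_inverse_exists fI.
  exists g; split=> // F FF CF; have [g' [Fg' g'K]] := fs_inv FF (H F FF CF).
  apply: (fs_ext FF Fg') => _ /imsetP[x xP ->]; by rewrite g'K // gK.
Qed.

(* Pulling a fusion system E on T back along a homomorphism th : S -> T gives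
   the fusion system of those morphisms on S that lift to E.  Consequently th
   is a morphism from <C>_S to E as soon as all generators in C lift. *)
Section Pullback.
Variables (gT rT : finGroupType) (S : {group gT}) (T : {set rT}) (E : fsys rT)
  (th : gT -> rT).
Hypotheses (EF : is_fusion_system T E) (thM : {in S &, {morph th : x y / x * y}})
  (thS : th @: S \subset T).

Definition lifts_to_E (P Q : {set gT}) (f : gT -> gT) :=
  exists beta, E (th @: P) (th @: Q) beta /\
               {in P, forall x, beta (th x) = th (f x)}.

Lemma pullback_fs : is_fusion_system S (restrict_inj S lifts_to_E).
Proof.
have thT (P : {set gT}) : P \subset S -> th @: P \subset T.
  by move=> sPS; exact: (subset_trans (imsetS _ sPS) thS).
apply: restrict_inj_fs.
- by move=> P Q f g _ [b [Eb eb]] e; exists b; split=> // x xP; rewrite eb ?e.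
- move=> P Q s sPS sQS sS sPQ; exists (conjg^~ (th s)).
  have thJ x : x \in P -> th (x ^ s) = th x ^ th s.
    by move=> xP; apply: (@morphJ _ _ S (Morphism thM)); rewrite // (subsetP sPS).
  split; last by move=> x xP; rewrite thJ.
  have gtP := hom_image_group thM (groupP P) sPS.
  have gtQ := hom_image_group thM (groupP Q) sQS.
  apply: (fs_conj EF (P := Group gtP) (Q := Group gtQ)) => /=; rewrite ?thT //.
    by apply: (subsetP thS); apply: imset_f.
  apply/subsetP=> _ /imsetP[_ /imsetP[x xP ->] ->].
  by rewrite -thJ //; apply: imset_f; apply: (subsetP sPQ); apply: imset_f.
- move=> P Q R f g [_ _ _ _ [_ _ sfQ]] _ [b1 [Eb1 eb1]] [b2 [Eb2 eb2]].
  exists (b2 \o b1); split; first exact: (fs_comp EF Eb1 Eb2).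
  by move=> x xP /=; rewrite eb1 // eb2 //; apply: (subsetP sfQ); apply: imset_f.
- move=> P Q f _ [b [Eb eb]]; exists b; split=> //.
  have <- : b @: (th @: P) = th @: (f @: P).
    by rewrite -!imset_comp; apply: eq_in_imset => x xP /=; rewrite eb.
  exact: (fs_img EF Eb).
- move=> P Q f g _ [b [Eb eb]] gK.
  have Eimg : b @: (th @: P) = th @: (f @: P).
    by rewrite -!imset_comp; apply: eq_in_imset => x xP /=; rewrite eb.
  have [b' [Eb' b'K]] := fs_inv EF Eb.
  exists b'; split; first by rewrite -Eimg.
  by move=> _ /imsetP[x xP ->]; rewrite gK // -eb // b'K //; apply: imset_f.
Qed.

Lemma fs_morphism_of_generators (C : fsys gT) :
  (forall P Q f, C P Q f -> restrict_inj S lifts_to_E P Q f) ->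
  is_fs_morphism S (gen_fusion S C) T E th.
Proof.
by move=> CX; split=> // P R f _ _ Hf; have [_] := Hf _ pullback_fs CX.
Qed.

End Pullback.

Section Walks.
Variables (V Ed : finType) (ends : Ed -> V * V).

Lemma walk_shortcut u w k vs es i j : walk ends u w k vs es ->
  i < j -> j <= k -> vs i = vs j ->
  walk ends u w (k - (j - i))
    (fun m => if m <= i then vs m else vs (m + (j - i)))
    (fun m => if m < i then es m else es (m + (j - i))).
Proof.
move=> [H0 Hk Hs] lt_ij le_jk eij; split.
- by rewrite leq0n.
- case: ifP => H; last by rewrite -Hk; congr vs; lia.
  have -> : k - (j - i) = i by lia.
  by rewrite eij -Hk; congr vs; lia.
- move=> m mk; case: (ltnP m i) => mi; first by rewrite (ltnW mi); apply: Hs; lia.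
  have -> : (if m <= i then vs m else vs (m + (j - i))) = vs (m + (j - i)).
    case: ifP => // mi'; have Emi : m = i by lia.
    by rewrite Emi eij; congr vs; lia.
  have -> : m.+1 + (j - i) = (m + (j - i)).+1 by lia.
  by apply: Hs; lia.
Qed.

Lemma path_of_walk u w k vs es : walk ends u w k vs es ->
  exists k' vs' es', walk ends u w k' vs' es' /\
    forall i j, i <= k' -> j <= k' -> vs' i = vs' j -> i = j.
Proof.
elim/ltn_ind: k vs es => k IH vs es Hw.
have [[i [j [lt_ij le_jk eij]]] | simple] :
    (exists i j, [/\ i < j, j <= k & vs i = vs j]) \/
    (forall i j, i <= k -> j <= k -> vs i = vs j -> i = j).
  case: (boolP [exists i : 'I_k.+1, exists j : 'I_k.+1, (vs i == vs j) && (i < j)]).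
    case/existsP=> i /existsP[j /andP[/eqP eij ltij]].
    by left; exists i, j; split=> //; rewrite -ltnS.
  move=> Hn; right=> i j ik jk eij.
  have repeat a b : a <= k -> b <= k -> a < b -> vs a = vs b -> False.
    move=> ak bk ab eab; case/negP: Hn; apply/existsP.
    exists (Ordinal (ak : a < k.+1)); apply/existsP.
    by exists (Ordinal (bk : b < k.+1)); rewrite /= eab eqxx.
  case: (ltngtP i j) => // lt; first by case: (repeat i j ik jk lt eij).
  by case: (repeat j i jk ik lt (esym eij)).
- have shorter : k - (j - i) < k by lia.
  exact: IH shorter _ _ (walk_shortcut Hw lt_ij le_jk eij).
- by exists k, vs, es.
Qed.

Lemma joins_sym e a b : joins ends e a b -> joins ends e b a.
Proof. by case=> H; [right|left]. Qed.

Lemma adjacent_sym a b : adjacent ends a b -> adjacent ends b a.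
Proof.
by case=> ne [e H]; split; [move=> E; apply: ne | exists e; apply: joins_sym].
Qed.

Lemma joins_incident_l e a b : joins ends e a b -> incident ends e a.
Proof. by rewrite /joins /incident; case=> ->; [left|right]. Qed.

Lemma joins_incident_r e a b : joins ends e a b -> incident ends e b.
Proof. by move/joins_sym; apply: joins_incident_l. Qed.

End Walks.

Definition update (T : Type) (h : nat -> T) (k : nat) (y : T) : nat -> T :=
  fun i => if i == k then y else h i.

Lemma chain_comp_eq (T : Type) (a b : nat -> T -> T) k :
  (forall i, i < k -> a i =1 b i) -> chain_comp a k =1 chain_comp b k.
Proof.
elim: k => // k IH e x /=.
by rewrite IH ?e // => i ik; apply: e; apply: ltnW.
Qed.

Lemma chain_compS (T : Type) (a : nat -> T -> T) k x :
  chain_comp a k.+1 x = a k (chain_comp a k x).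
Proof. by []. Qed.

Section Tree.
Variables (p : nat) (V Ed : finType) (ends : Ed -> V * V) (gT : finGroupType)
  (Sv : V -> {group gT}) (Se : Ed -> {group gT}) (Fv : V -> fsys gT)
  (Fe : Ed -> fsys gT) (vstar : V).
Hypotheses (HT : tree_of_fusion_systems p ends Sv Se Fv Fe)
  (HH : hypH ends Sv Se vstar).

Let S := Sv vstar.

Lemma Fv_fs v : is_fusion_system (Sv v) (Fv v).
Proof. by case: HT => _ _ H _ _; case: (H v). Qed.

Lemma Se_sub e v : incident ends e v -> Se e \subset Sv v.
Proof. by case: HT => _ _ _ _ H /H []. Qed.

(* Induction towards the root v_star: to prove a property of all vertices it
   suffices to prove it at v_star and to pass it from the next vertex w on the
   path to v_star back to v, along an edge e with S(e) = S(v) (hypothesis (H)). *)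
Lemma toward_root_ind (Q : V -> Prop) : Q vstar ->
  (forall v w e, v <> vstar -> v <> w -> joins ends e v w ->
     (Se e : {set gT}) = Sv v -> Q w -> Q v) ->
  forall v, Q v.
Proof.
move=> Qroot Qstep v; have [_ [_ connected _] _ _ _] := HT.
have [k [vs [es Hw]]] := connected v vstar.
have [{Hw}k [{}vs [{}es [Hw simple]]]] := path_of_walk Hw.
elim: k v vs es Hw simple => [|k IH] v vs es [H0 Hk Hst] simple.
  by rewrite -H0 Hk.
have nv : v <> vstar.
  by move=> E; have := simple 0 k.+1 isT (leqnn _); rewrite H0 Hk E => /(_ erefl).
have nvw : v <> vs 1%N.
  by move=> E; have := simple 0 1%N isT isT; rewrite H0 E => /(_ erefl).
have J : joins ends (es 0) v (vs 1%N) by rewrite -H0; apply: Hst.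
apply: (Qstep v (vs 1%N) (es 0)) => //.
  by apply: HH => //; exists k.+1, vs, es.
apply: (IH (vs 1%N) (fun i => vs i.+1) (fun i => es i.+1)).
  by split=> // i; apply: (Hst i.+1).
by move=> i j ik jk /(simple i.+1 j.+1 ik jk) [].
Qed.

Lemma Sv_sub v : Sv v \subset S.
Proof.
elim/toward_root_ind: v => // v w e _ _ J E sw.
by rewrite -E; apply: subset_trans sw; apply: Se_sub; apply: joins_incident_r J.
Qed.

Inductive tree_chain : V -> V -> {set gT} -> (gT -> gT) -> Prop :=
| chain_step v (P : {set gT}) a :
    Fv v P (a @: P) a -> tree_chain v v P a
| chain_snoc s u v (P : {set gT}) f a :
    tree_chain s u P f -> adjacent ends u v ->
    Fv v (f @: P) (a @: (f @: P)) a -> tree_chain s v P (a \o f).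

(* The image of a chain is a subgroup, being the image of its last step. *)
Lemma chain_image_group s t P f : tree_chain s t P f -> group_set (f @: P).
Proof.
case=> [v Q a Fa | s' u v Q g a _ _ Fa]; first by case: (fs_sub_inj (Fv_fs v) Fa).
by rewrite imset_comp; case: (fs_sub_inj (Fv_fs v) Fa).
Qed.

Lemma chain_merge s u P f a : tree_chain s u P f ->
  Fv u (f @: P) (a @: (f @: P)) a -> tree_chain s u P (a \o f).
Proof.
case=> [v Q b Fb | s' u' v Q g b Cg Adj Fb] Fa.
  by apply: chain_step; rewrite imset_comp; exact: (fs_comp (Fv_fs v) Fb Fa).
apply: (chain_snoc (a := a \o b) Cg Adj); rewrite imset_comp.
by rewrite imset_comp in Fa; exact: (fs_comp (Fv_fs v) Fb Fa).
Qed.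

Definition linked (u v : V) := u = v \/ adjacent ends u v.

Lemma linked_sym u v : linked u v -> linked v u.
Proof. by case=> [->|H]; [left | right; apply: adjacent_sym]. Qed.

Lemma chain_link s u v P f a : tree_chain s u P f -> linked u v ->
  Fv v (f @: P) (a @: (f @: P)) a -> tree_chain s v P (a \o f).
Proof.
move=> Cf [<- | Adj] Fa; first exact: (chain_merge Cf Fa).
exact: (chain_snoc Cf Adj Fa).
Qed.

Lemma chain_concat w t Q g : tree_chain w t Q g -> forall s u P f,
  tree_chain s u P f -> linked u w -> f @: P \subset Q -> tree_chain s t P (g \o f).
Proof.
elim=> [v Q' a Fa | s' x y Q' g' a Cg IH Adj Fa] s u P f Cf L sfQ.
  exact: (chain_link Cf L (fs_restr (Fv_fs v) Fa (chain_image_group Cf) sfQ)).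
have Cgf := IH _ _ _ _ Cf L sfQ.
apply: (chain_snoc Cgf Adj); apply: (fs_restr (Fv_fs y) Fa (chain_image_group Cgf)).
by rewrite imset_comp; apply: imsetS.
Qed.

Lemma chain_rev s t P f : tree_chain s t P f ->
  exists g, tree_chain t s (f @: P) g /\ {in P, forall x, g (f x) = x}.
Proof.
have back v Q a : Fv v Q (a @: Q) a ->
    exists b, tree_chain v v (a @: Q) b /\ {in Q, forall x, b (a x) = x}.
  move=> Fa; have [b [Fb bK]] := fs_inv (Fv_fs v) Fa.
  exists b; split=> //; apply: chain_step.
  by rewrite -imset_comp (eq_in_imset (bK : {in Q, b \o a =1 id})) imset_id.
elim=> [v Q a /back // | s' u v Q f' a Cf [g [Cg gK]] Adj Fa].
have [b [Cb bK]] := back _ _ _ Fa.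
have Cgb := chain_concat Cg Cb (linked_sym (or_intror Adj)).
exists (g \o b); split; last by move=> x xQ /=; rewrite bK ?gK //; apply: imset_f.
rewrite imset_comp; apply: Cgb.
by rewrite -imset_comp (eq_in_imset (bK : {in f' @: Q, b \o a =1 id})) imset_id.
Qed.

Lemma chain_down v (P : {set gT}) : group_set P -> P \subset Sv v ->
  tree_chain vstar v P id.
Proof.
elim/toward_root_ind: v P => [|v w e _ nvw J E IH] P gP sP.
  by apply: chain_step; rewrite imset_id; exact: (fs_incl (Fv_fs vstar) gP gP sP).
have sPw : P \subset Sv w.
  by apply: subset_trans sP _; rewrite -E; apply: Se_sub; apply: joins_incident_r J.
have Adj : adjacent ends w v.
  by split; [move=> E'; apply: nvw | exists e; apply: joins_sym].
apply: (chain_snoc (a := id) (IH P gP sPw) Adj); rewrite !imset_id.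
exact: (fs_incl (Fv_fs v) gP gP sP).
Qed.

(* The maps on subgroups of S realized by a chain from the root back to the
   root. *)
Definition closed_chain (P Q : {set gT}) (f : gT -> gT) :=
  exists f', tree_chain vstar vstar P f' /\ {in P, f =1 f'}.

Lemma chain_fs : is_fusion_system S (restrict_inj S closed_chain).
Proof.
apply: restrict_inj_fs.
- by move=> P Q f g _ [f' [Cf ef]] e; exists f'; split=> // x xP; rewrite -e ?ef.
- move=> P Q s sPS sQS sS sPQ; exists (conjg^~ s); split=> //; apply: chain_step.
  exact: (fs_img (Fv_fs vstar) (fs_conj (Fv_fs vstar) sPS sQS sS sPQ)).
- move=> P Q R f g [_ _ _ _ [_ _ sfQ]] _ [f' [Cf ef]] [g' [Cg eg]].
  exists (g' \o f'); split.
    by apply: (chain_concat Cg Cf (or_introl erefl)); rewrite -(eq_in_imset ef).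
  by move=> x xP /=; rewrite -ef // eg //; apply: (subsetP sfQ); apply: imset_f.
- by move=> P Q f _ [f' Hf]; exists f'.
- move=> P Q f g _ [f' [Cf ef]] gK; have [g' [Cg g'K]] := chain_rev Cf.
  exists g'; split; first by rewrite (eq_in_imset ef).
  by move=> _ /imsetP[x xP ->]; rewrite gK // (ef x xP) g'K.
Qed.

(* Every generator Hom_F(v)(P, S(v)) is realized by a closed chain: go down
   from the root to v, apply it in F(v), and go back up. *)
Lemma chain_of_generator P Q f : tree_generators Sv Fv P Q f ->
  restrict_inj S closed_chain P Q f.
Proof.
case=> v [-> Ff]; have [gP gQ sP _ fI] := fs_sub_inj (Fv_fs v) Ff.
split; first by split=> //; [apply: subset_trans sP (Sv_sub v) | apply: Sv_sub].
have [_ gfP _ sfP _] := fs_sub_inj (Fv_fs v) (fs_img (Fv_fs v) Ff).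
have Cf : tree_chain vstar v P f.
  apply: (chain_merge (a := f) (chain_down gP sP)).
  by rewrite imset_id; apply: (fs_img (Fv_fs v) Ff).
have [g [Cup gK]] := chain_rev (chain_down gfP sfP); rewrite imset_id in Cup.
exists (g \o f); split; first exact: (chain_concat Cup Cf (or_introl erefl)).
by move=> x xP /=; rewrite gK //; apply: imset_f.
Qed.

Definition path_decomposition (P : {set gT}) (f : gT -> gT) (n : nat)
    (vs : nat -> V) (Ps : nat -> {set gT}) (alphas : nat -> gT -> gT) :=
  [/\ Ps 0 = P, Ps n = f @: P,
      (forall i, i.+1 < n -> adjacent ends (vs i) (vs i.+1)),
      (forall i, i < n -> Fv (vs i) (Ps i) (Ps i.+1) (alphas i)) &
      {in P, f =1 chain_comp alphas n}].

Lemma decomposition_snoc P f n vs Ps alphas v a :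
  path_decomposition P f n.+1 vs Ps alphas -> adjacent ends (vs n) v ->
  Fv v (f @: P) (a @: (f @: P)) a ->
  path_decomposition P (a \o f) n.+2 (update vs n.+1 v)
    (update Ps n.+2 (a @: (f @: P))) (update alphas n.+1 a).
Proof.
case=> P0 Pn Adj Steps Comp Adjv Fa; rewrite /update; split=> //.
- by rewrite eqxx -imset_comp.
- move=> i lti; rewrite eqSS (_ : (i == n.+1) = false); last by lia.
  by have [-> | ne] := eqVneq i n; last by apply: Adj; lia.
- move=> i lti; rewrite eqSS (ltn_eqF lti).
  by have [-> | ne] := eqVneq i n.+1; [rewrite Pn | apply: Steps; lia].
- move=> x xP; rewrite chain_compS eqxx [LHS]/= Comp //; congr a.
  apply: (chain_comp_eq (a := alphas)) => i lti y.
  by rewrite (ltn_eqF lti).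
Qed.

Lemma chain_decomposition s t P f : tree_chain s t P f ->
  exists n vs Ps alphas, vs n = t /\ path_decomposition P f n.+1 vs Ps alphas.
Proof.
elim=> [v Q a Fa | s' u v Q f' a _ [n [vs [Ps [al [Hn D]]]]] Adj Fa].
  exists 0, (fun _ => v), (fun i => if i == 0 then Q else a @: Q), (fun _ => a).
  by split=> //; split=> // -[].
exists n.+1, (update vs n.+1 v), (update Ps n.+2 (a @: (f' @: Q))), (update al n.+1 a).
split; first by rewrite /update eqxx.
by apply: (decomposition_snoc D _ Fa); rewrite Hn.
Qed.

Let FT := gen_fusion S (tree_generators Sv Fv).

(* F_T is a fusion system, since the closed chains contain its generators. *)
Lemma FT_fs : is_fusion_system S FT.
Proof. exact: (gen_fusion_fs chain_fs chain_of_generator). Qed.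

Lemma FT_chain P Q f : FT P Q f -> restrict_inj S closed_chain P Q f.
Proof. by move=> H; apply: H chain_fs chain_of_generator. Qed.

(* Each F(v) is contained in F_T: retarget to S(v), then to any R. *)
Lemma Fv_FT v P R alpha : Fv v P R alpha -> FT P R alpha.
Proof.
move=> H; have [gP gR sP sR [_ _ saR]] := fs_sub_inj (Fv_fs v) H.
have Hv : Fv v P (Sv v) alpha.
  exact: (fs_retarget (Fv_fs v) H (subset_trans saR sR) (groupP _) (subxx _)).
have Hgen : FT P (Sv v) alpha by move=> F FF CF; apply: CF; exists v.
exact: (fs_retarget FT_fs Hgen saR gR (subset_trans sR (Sv_sub v))).
Qed.

(* F_T with the inclusions is a cocone; the edge components come from the
   inclusion of F(e) in F(v) for either end v of e. *)
Lemma FT_cocone : fs_cocone ends Sv Se Fv Fe S FT (fun _ x => x) (fun _ x => x).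
Proof.
split=> // [v | e].
  split=> //; first by rewrite imset_id; apply: Sv_sub.
  move=> P R alpha _ _ H; exists alpha.
  by rewrite !imset_id; split=> //; exact: (Fv_FT H).
have inc : incident ends e (ends e).1 by left.
have [_ _ _ _ Hinc] := HT; have [sE [[_ _ Hom] _]] := Hinc e _ inc.
split=> //; first by rewrite imset_id; apply: subset_trans sE (Sv_sub _).
move=> P R alpha sP sR H; have [beta [Fb eb]] := Hom P R alpha sP sR H.
by exists beta; split=> //; exact: (Fv_FT Fb).
Qed.

(* The universal property: a cocone psi to E is determined by its component at
   the root, which is a morphism from F_T to E. *)
Section Universal.
Variables (rT : finGroupType) (T : {group rT}) (E : fsys rT)
  (psiv : V -> gT -> rT) (psie : Ed -> gT -> rT).
Hypotheses (EF : is_fusion_system T E)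
  (Hco : fs_cocone ends Sv Se Fv Fe T E psiv psie).

(* The components of a cocone all agree with the one at the root, since they
   agree across each edge with S(e) = S(v). *)
Lemma cocone_root v : {in Sv v, psiv v =1 psiv vstar}.
Proof.
elim/toward_root_ind: v => // v w e _ _ J Ee IH x xv; have [_ _ Hc] := Hco.
have xe : x \in Se e by rewrite Ee.
rewrite -(Hc e v (joins_incident_l J)) // (Hc e w (joins_incident_r J)) // IH //.
exact: (subsetP (Se_sub (joins_incident_r J))).
Qed.

(* By the pullback criterion, as the generators of F_T lift to E. *)
Lemma cocone_root_morphism : is_fs_morphism S FT T E (psiv vstar).
Proof.
have [Hv _ _] := Hco; have [thM thS _] := Hv vstar.
apply: fs_morphism_of_generators => // P Q f Hgen.
have [Hsub _] := chain_of_generator Hgen.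
split=> //; case: Hgen => v [EQ Ff]; subst Q.
have [_ _ sP _ [_ _ sfQ]] := fs_sub_inj (Fv_fs v) Ff; have [_ _ Hom] := Hv v.
have [b [Eb eb]] := Hom P (Sv v) f sP (subxx _) Ff.
have eP : psiv v @: P = psiv vstar @: P.
  by apply: eq_in_imset => x xP; apply: cocone_root; apply: (subsetP sP).
exists b; split; first by rewrite -eP -(eq_in_imset (@cocone_root v)).
move=> x xP; have fxv : f x \in Sv v by apply: (subsetP sfQ); apply: imset_f.
by rewrite -(cocone_root (subsetP sP x xP)) -(cocone_root fxv) eb.
Qed.

End Universal.

End Tree.

Theorem lemma2p3 (p : nat) (V Ed : finType) (ends : Ed -> V * V)
    (gT : finGroupType) (Sv : V -> {group gT}) (Se : Ed -> {group gT})
    (Fv : V -> fsys gT) (Fe : Ed -> fsys gT) (vstar : V) :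
  tree_of_fusion_systems p ends Sv Se Fv Fe ->
  hypH ends Sv Se vstar ->
  let S := Sv vstar in
  let FT := gen_fusion S (tree_generators Sv Fv) in
  fs_colimit p ends Sv Se Fv Fe S FT /\
  (forall (P : {set gT}) (alpha : gT -> gT), FT P S alpha ->
     exists (n : nat) (vs : nat -> V) (Ps : nat -> {set gT})
            (alphas : nat -> gT -> gT),
       [/\ Ps 0 = P, Ps n = alpha @: P,
           (forall i, i.+1 < n -> adjacent ends (vs i) (vs i.+1)),
           (forall i, i < n ->
              [/\ Ps i \subset Sv (vs i), Ps i.+1 \subset Sv (vs i)
                & Fv (vs i) (Ps i) (Ps i.+1) (alphas i)]) &
           {in P, alpha =1 chain_comp alphas n}]).
Proof.
move=> HT HH S FT; split.
  (* F_T with the inclusions is a cocone; any other cocone factors through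
     its component at the root, which is forced on S. *)
  split; [by case: HT => _ _ /(_ vstar) [] | exact: (FT_fs HT HH) |
          exact: (FT_cocone HT HH) |].
  move=> rT T E psiv psie _ EF Hco; exists (psiv vstar); split.
  - exact: (cocone_root_morphism HT HH EF Hco).
  - by move=> v x xv; rewrite (cocone_root HT HH Hco xv).
  - move=> e x xe; have inc : incident ends e (ends e).1 by left.
    have [_ _ Hc] := Hco; rewrite (Hc e _ inc) // (cocone_root HT HH Hco) //.
    exact: (subsetP (Se_sub HT inc)).
  - by move=> th' _ Hroot _ x xS; apply: Hroot.
move=> P alpha /(FT_chain HT HH) [_ [f [Cf ef]]].
have [n [vs [Ps [alphas [_ [P0 Pn Adj Steps Comp]]]]]] := chain_decomposition Cf.
exists n.+1, vs, Ps, alphas; split=> //.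
- by rewrite Pn; apply: eq_in_imset => x xP; rewrite ef.
- move=> i lti; have Fi := Steps i lti.
  by have [_ _ sPi sPi1 _] := fs_sub_inj (Fv_fs HT (vs i)) Fi.
- by move=> x xP; rewrite ef // Comp.
Qed.
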